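(* Let $G\in\mathcal{G}_{k,n,p}$ and $v\neq w\in V(G)$. Then $|H_{wv}-n|\lesssim (pn)^k$.
   Context: Fix an integer $k\ge2$ and let $p=p(n)$ satisfy $\frac{\log n}{n^{(k-1)/k}}\le p\le 1-\Omega(\frac{\log^4 n}{n})$. $\mathcal{G}_{k,n,p}$ denotes the set of graphs $G$ on $n$ vertices satisfying: (i) $G$ is not bipartite; (ii) $\operatorname{diam}(G)\le k$; (iii) every vertex has degree $d(v)=pn\pm\mathcal{O}(\sqrt{pn\log n})$; (iv) $2|E(G)|=pn^2\pm\mathcal{O}(\sqrt{pn^2\log n})$; (v) $|N(v)\cap N(w)|=p^2n\pm\mathcal{O}(\max\{\sqrt{p^2n\log n},\log n\})$ for all $v\ne w$; (vi) the unit eigenvector $\phi$ of the largest adjacency eigenvalue has entries $\phi_i=\frac1{\sqrt n}\pm\mathcal{O}(\frac{\log^{3/2}n}{\sqrt p\,n\log(pn)})$; (vii) $\lambda_1=(1+o(1))pn$; (viii) $\max\{|\lambda_2|,|\lambda_n|\}=\mathcal{O}(\sqrt{pn})$, where $\lambda_1\ge\dots\ge\lambda_n$ are the adjacency eigenvalues. Asymptotic notation is as $n\to\infty$ with constants independent of $n$; $f\lesssim g$ means $f=\mathcal{O}(g)$. $H_{wv}$ is the expected first hitting time of $v$ for a simple random walk on $G$ started at $w$. *)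

From HB Require Import structures.
From mathcomp Require Import all_boot all_order all_algebra.
From mathcomp Require Import all_classical all_reals all_analysis.
Set Implicit Arguments. Unset Strict Implicit. Unset Printing Implicit Defensive.
Import Order.TTheory GRing.Theory Num.Theory.
Import numFieldNormedType.Exports.
Local Open Scope ring_scope.

Section GraphDefs.
Context {R : realType} {n : nat}.
Variable e : rel 'I_n.

Definition is_simple_graph : Prop := symmetric e /\ irreflexive e.

Definition deg (x : 'I_n) : nat := #|[pred y | e x y]|.

Definition codeg (x y : 'I_n) : nat := #|[pred z | e x z && e y z]|.

Definition nedges : nat :=
  #|[pred xy : 'I_n * 'I_n | e xy.1 xy.2 && (xy.1 < xy.2)%N]|.

Definition bipartite : Prop :=
  exists f : 'I_n -> bool, forall x y, e x y -> f x != f y.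

Definition diam_le (k : nat) : Prop :=
  forall x y : 'I_n, exists s : seq 'I_n,
    (size s <= k)%N /\ path e x s /\ last x s = y.

Definition adjmx : 'M[R]_n := \matrix_(i, j) (e i j)%:R.

(* lam = (λ_1 >= ... >= λ_n), the adjacency eigenvalues with multiplicity *)
Definition adj_spectrum (lam : seq R) : Prop :=
  [/\ size lam = n, sorted (fun x y => y <= x) lam &
      char_poly adjmx = \prod_(x <- lam) ('X - x%:P)].

Definition trans (x y : 'I_n) : R := if e x y then (deg x)%:R^-1 else 0.

(* P_w(τ_v = t): the walk x_0 = w, ..., x_t = v avoids v before time t *)
Definition first_hit_prob (w v : 'I_n) (t : nat) : R :=
  \sum_(s : (t.+1).-tuple 'I_n |
          [&& nth w s 0 == w, nth w s t == v &
              all (fun i => nth w s i != v) (iota 0 t)])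
    \prod_(i < t) trans (nth w s i) (nth w s i.+1).

(* H_{wv} = E_w[τ_v] = Σ_t t P_w(τ_v = t)  (extended real) *)
Definition hitting_time (w v : 'I_n) : \bar R :=
  (\sum_(0 <= t <oo) ((t%:R * first_hit_prob w v t)%:E))%E.

(* membership in G_{k,n,p}, with explicit constants C3 C4 C5 C6 C8 for the
   O-terms in (iii),(iv),(v),(vi),(viii), and eps for the o(1) in (vii) *)
Definition in_Gknp (k : nat) (p C3 C4 C5 C6 C8 eps : R) : Prop :=
  let nR := (n%:R : R) in
  let lg := ln nR in
  [/\ is_simple_graph, ~ bipartite, diam_le k,
      [/\ (forall v, `|(deg v)%:R - p * nR| <= C3 * Num.sqrt (p * nR * lg)),
      `|2 * (nedges%:R) - p * nR ^+ 2| <= C4 * Num.sqrt (p * nR ^+ 2 * lg) &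
      (forall v w, v != w ->
         `|(codeg v w)%:R - p ^+ 2 * nR|
           <= C5 * Num.max (Num.sqrt (p ^+ 2 * nR * lg)) lg)] &
      exists lam : seq R, adj_spectrum lam /\
        [/\ (exists phi : 'cV[R]_n,
               [/\ adjmx *m phi = nth 0 lam 0 *: phi,
                   \sum_i (phi i 0) ^+ 2 = 1 &
                   forall i, `|phi i 0 - (Num.sqrt nR)^-1|
                     <= C6 * (lg `^ (3%:R / 2%:R))
                           / (Num.sqrt p * nR * ln (p * nR))]),
            `|nth 0 lam 0 - p * nR| <= eps * (p * nR) &
            Num.max `|nth 0 lam 1| `|nth 0 lam n.-1| <= C8 * Num.sqrt (p * nR)]].

End GraphDefs.

From HB Require Import structures.
From mathcomp Require Import all_boot all_order all_algebra.
From mathcomp Require Import all_classical all_reals all_analysis.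
From mathcomp Require Import lra.
Import Order.TTheory GRing.Theory Num.Theory.
Import numFieldNormedType.Exports.

Set Implicit Arguments.
Unset Strict Implicit.
Unset Printing Implicit Defensive.

Local Open Scope ring_scope.

(* Under the density assumption n <= (pn)^k, so it suffices to bound H_wv by
   O((pn)^k).  Every degree is at most D = O(pn) and the diameter is at most k,
   so from any vertex the walk follows a shortest path to v within k steps with
   probability at least D^-k.  Hence P(tau_v > t + k) <= (1 - D^-k) P(tau_v > t)
   for every start, and E tau_v = sum_t P(tau_v > t) <= k D^k. *)

Lemma expR1_le4 (R : realType) : expR (1 : R) <= 4.
Proof.
have h : 2^-1 <= expR (- 2^-1 : R) by apply: le_trans (expR_ge1Dx _); lra.
have e2 : expR (2^-1 : R) <= 2.
  by rewrite -[X in _ <= X]invrK -lef_pV2 ?posrE ?invr_gt0 ?expR_gt0 // invrK -expRN.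
rewrite [X in expR X](_ : _ = 2^-1 * 2%:R); last by rewrite mulVf ?pnatr_eq0.
rewrite expRM_natr (_ : 4 = 2 ^+ 2 :> R); last by rewrite expr2; lra.
by rewrite ler_pXn2r ?nnegrE ?expR_ge0.
Qed.

Lemma ln_ge1 (R : realType) (x : R) : 4 <= x -> 1 <= ln x.
Proof.
move=> x4; have x0 : 0 < x by apply: lt_le_trans x4.
rewrite -[X in X <= _](expRK 1) ler_ln ?posrE ?expR_gt0 //.
exact: le_trans (expR1_le4 R) x4.
Qed.

Lemma density_bounds (R : realType) (k : nat) (x P : R) : (0 < k)%N -> 1 <= ln x ->
  ln x / x `^ ((k - 1)%:R / k%:R) * x <= P -> [/\ 1 <= P, ln x <= P & x <= P ^+ k].
Proof.
move=> k0 lx1 hP.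
have x1 : 1 <= x by rewrite leNgt; apply/negP => /ltW/ln_le0; lra.
have x0 : 0 < x by apply: lt_le_trans x1.
have kR : k%:R != 0 :> R by rewrite pnatr_eq0 -lt0n.
set y := x `^ k%:R^-1.
have y1 : 1 <= y by rewrite -(powRr0 x) ler_powR ?invr_ge0.
have yk : y ^+ k = x.
  by rewrite -powR_mulrn ?powR_ge0 // -powRrM mulVf // powRr1 // ltW.
have hx : x `^ ((k - 1)%:R / k%:R) = x / y.
  by rewrite natrB // mulrBl mulfV // mul1r powRB ?(gt_eqF x0) ?implybT // powRr1 // ltW.
have lxy : ln x * y <= P by move: hP; rewrite hx invf_div mulrA divfK ?gt_eqF.
split; first nra; first nra.
by rewrite -yk ler_pXn2r ?nnegrE //; nra.
Qed.

Lemma sqrt_mul_le (R : rcfType) (P L : R) : 0 <= P -> L <= P -> Num.sqrt (P * L) <= P.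
Proof.
move=> P0 LP; rewrite -[X in _ <= X](ger0_norm P0) -sqrtr_sqr ler_sqrt ?sqr_ge0 //.
by rewrite expr2 ler_wpM2l.
Qed.

Lemma big_tuple_cons (T : finType) (V : nmodType) m (F : m.+1.-tuple T -> V) :
  \sum_(s : m.+1.-tuple T) F s = \sum_(y : T) \sum_(s : m.-tuple T) F [tuple of y :: s].
Proof.
rewrite pair_big (reindex (fun p : T * m.-tuple T => [tuple of p.1 :: p.2])) //=.
exists (fun s => (thead s, [tuple of behead s])) => [[y s] _ | s _].
  by congr pair; apply: val_inj.
by apply: val_inj; rewrite /= [in RHS](tuple_eta s).
Qed.

Lemma big_tuple0 (T : finType) (V : nmodType) (F : 0.-tuple T -> V) :
  \sum_(s : 0.-tuple T) F s = F [tuple].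
Proof. by rewrite (big_pred1 [tuple]) // => s; apply/esym/eqP; exact: tuple0. Qed.

Lemma sum_mul_if_eq (T : finType) (V : pzSemiRingType) (a : T) (f : T -> V) b r :
  \sum_i f i * (if (a == i) && b then r else 0) = f a * (if b then r else 0).
Proof.
rewrite (bigD1 a) //= eqxx big1 ?addr0 // => i /negbTE ia.
by rewrite eq_sym ia mulr0.
Qed.

Section RandomWalk.
Variables (R : realType) (n : nat) (e : rel 'I_n).
Local Notation P := (@trans R n e).

Lemma trans_ge0 x y : 0 <= P x y.
Proof. by rewrite /trans; case: (e x y); rewrite ?invr_ge0 ?ler0n. Qed.

Lemma sum_trans_le1 x : \sum_y P x y <= 1.
Proof.
rewrite /trans -big_mkcond sumr_const -/(deg e x).
case: (deg e x) => [|d]; first by rewrite mulr0n ler01.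
by rewrite -(mulr_natr d.+1%:R^-1) mulVf ?pnatr_eq0.
Qed.

Lemma trans_ge_inv (D : R) x y : (forall z, (deg e z)%:R <= D) -> e x y -> D^-1 <= P x y.
Proof.
move=> hD exy; have dx : (0 < deg e x)%N by apply/card_gt0P; exists y.
by rewrite /trans exy lef_pV2 ?hD ?posrE ?ltr0n // (lt_le_trans _ (hD x)) ?ltr0n.
Qed.

Variable v : 'I_n.

(* [first_hit t x] and [no_hit t x] are the probabilities that the walk from [x]
   first visits [v] at time [t], resp. has not visited [v] up to time [t];
   [killed_step] is the transition operator of the walk killed at [v]. *)
Definition killed_step (f : 'I_n -> R) x := (x != v)%:R * \sum_y P x y * f y.
Definition first_hit t := iter t killed_step (fun x => (x == v)%:R).
Definition no_hit t := iter t killed_step (fun x => (x != v)%:R).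

Lemma killed_step_ge0 f x : (forall y, 0 <= f y) -> 0 <= killed_step f x.
Proof.
move=> f0; rewrite mulr_ge0 ?ler0n // sumr_ge0 // => y _.
by rewrite mulr_ge0 ?trans_ge0.
Qed.

Lemma ler_killed_step f g x : (forall y, f y <= g y) -> killed_step f x <= killed_step g x.
Proof.
move=> fg; rewrite ler_wpM2l ?ler0n // ler_sum // => y _.
by rewrite ler_wpM2l ?trans_ge0.
Qed.

Lemma killed_stepD f g x : killed_step (f \+ g) x = killed_step f x + killed_step g x.
Proof.
rewrite /killed_step -mulrDr -big_split; congr (_ * _).
by apply: eq_bigr => y _; exact: mulrDr.
Qed.

Lemma killed_stepMr f b x : killed_step (fun y => f y * b) x = killed_step f x * b.
Proof. by rewrite /killed_step -mulrA mulr_suml; under eq_bigr do rewrite mulrA. Qed.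

Lemma killed_step_le f x : (forall y, f y <= 1) -> killed_step f x <= (x != v)%:R.
Proof.
move=> f1; rewrite -[X in _ <= X]mulr1 ler_wpM2l ?ler0n //.
apply: le_trans (sum_trans_le1 x); rewrite ler_sum // => y _.
by rewrite ler_piMr ?trans_ge0.
Qed.

Lemma first_hit_ge0 t x : 0 <= first_hit t x.
Proof. by elim: t x => [|t IH] x; [exact: ler0n | exact: killed_step_ge0]. Qed.

Lemma no_hit_ge0 t x : 0 <= no_hit t x.
Proof. by elim: t x => [|t IH] x; [exact: ler0n | exact: killed_step_ge0]. Qed.

Lemma no_hit_le t x : no_hit t x <= (x != v)%:R.
Proof.
elim: t x => [|t IH] x //; apply: killed_step_le => y.
by apply: le_trans (IH y) _; case: (y != v).
Qed.

Lemma no_hit_le1 t x : no_hit t x <= 1.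
Proof. by apply: le_trans (no_hit_le t x) _; case: (x != v). Qed.

Lemma first_hitS_no_hitS_le t x : first_hit t.+1 x + no_hit t.+1 x <= no_hit t x.
Proof.
rewrite -killed_stepD; elim: t x => [|t IH] x.
  by apply: killed_step_le => y /=; case: (y == v); rewrite ?addr0 ?add0r.
by apply: (@ler_killed_step _ (no_hit t)) => y; rewrite /= -killed_stepD; exact: IH.
Qed.

Lemma no_hit_antitone j t x : (j <= t)%N -> no_hit t x <= no_hit j x.
Proof.
move=> /subnK <-; elim: (t - j)%N x => [|m IH] x //.
apply: le_trans (IH x); apply: le_trans (first_hitS_no_hitS_le _ x).
by rewrite lerDr first_hit_ge0.
Qed.

Lemma no_hit_v t : no_hit t v = 0.
Proof. by apply/eqP; rewrite eq_le no_hit_ge0 andbT (le_trans (no_hit_le t v)) ?eqxx. Qed.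

Lemma no_hit_submul j t b x : (forall y, no_hit t y <= b) ->
  no_hit (j + t) x <= no_hit j x * b.
Proof.
move=> hb; elim: j x => [|j IH] x.
  by case: (eqVneq x v) => [->|xv]; rewrite ?no_hit_v ?mul0r //= xv mul1r.
by rewrite addSn /= -killed_stepMr; apply: ler_killed_step.
Qed.

Lemma no_hit_path (D : R) s x : 1 <= D -> (forall z, (deg e z)%:R <= D) ->
  path e x s -> last x s = v -> no_hit (size s) x <= 1 - D^-1 ^+ size s.
Proof.
move=> D1 hD; have D0 : 0 < D by apply: lt_le_trans D1.
have Dinv0 : 0 <= D^-1 by rewrite invr_ge0 ltW.
have Dinv1 : D^-1 <= 1 by rewrite invr_le1 ?unitfE ?gt_eqF.
elim: s x => [|y s IH] x; first by move=> _ /= ->; rewrite expr0 subrr /= eqxx.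
move=> /andP[exy ps] ls; case: (eqVneq x v) => [->|xv].
  by rewrite no_hit_v subr_ge0 exprn_ile1.
rewrite [size _]/= /no_hit iterS -/(no_hit _) /killed_step xv mul1r (bigD1 y) //=.
have hy := IH y ps ls; have Py := trans_ge_inv hD exy.
have rest : \sum_(z | z != y) P x z * no_hit (size s) z <= \sum_(z | z != y) P x z.
  by rewrite ler_sum // => z _; rewrite ler_piMr ?trans_ge0 ?no_hit_le1.
have tot := sum_trans_le1 x; rewrite (bigD1 y) //= in tot.
have Dk : 0 <= D^-1 ^+ size s by rewrite exprn_ge0.
rewrite exprS; nra.
Qed.

Lemma no_hit_diam (D : R) k : 1 <= D -> (forall z, (deg e z)%:R <= D) ->
  diam_le e k -> forall y, no_hit k y <= 1 - D^-1 ^+ k.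
Proof.
move=> D1 hD hdiam y; have [s [sk [ps ls]]] := hdiam y v.
have D0 : 0 < D by apply: lt_le_trans D1.
apply: le_trans (no_hit_antitone y sk) _; apply: le_trans (no_hit_path D1 hD ps ls) _.
by rewrite lerB // ler_wiXn2l // ?invr_ge0 ?invr_le1 ?unitfE ?gt_eqF // ltW.
Qed.

Lemma sum_no_hit_le k q T x : (forall y, no_hit k y <= 1 - q) -> 0 < q ->
  \sum_(0 <= t < T) no_hit t x <= k%:R / q.
Proof.
move=> hk q0; have q1 : 0 <= 1 - q := le_trans (no_hit_ge0 k x) (hk x).
set S := \sum_(0 <= t < T) no_hit t x.
(* Shifting the sum by [k] steps gives [S <= k + (1 - q) S]. *)
have shift : \sum_(0 <= t < T) no_hit (t + k) x <= (1 - q) * S.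
  by rewrite /S mulr_sumr ler_sum // => t _; rewrite mulrC no_hit_submul.
have head : \sum_(0 <= t < k) no_hit t x <= k%:R.
  apply: le_trans (_ : _ <= \sum_(0 <= t < k) 1) _; last by rewrite sumr_const_nat subn0.
  by rewrite ler_sum // => t _; exact: no_hit_le1.
have split : \sum_(0 <= t < k + T) no_hit t x
    = \sum_(0 <= t < k) no_hit t x + \sum_(0 <= t < T) no_hit (t + k) x.
  by rewrite (@big_cat_nat _ _ _ k) ?leq_addr //= -{2}[k]add0n big_addn addKn.
have mono : S <= \sum_(0 <= t < k + T) no_hit t x.
  rewrite (@big_cat_nat _ _ _ T) ?leq_addl //= lerDl sumr_ge0 // => t _.
  exact: no_hit_ge0.
rewrite ler_pdivlMr //; nra.
Qed.

Lemma partial_mean_first_hit T x :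
  \sum_(0 <= t < T.+1) t%:R * first_hit t x + T%:R * no_hit T x
    <= \sum_(0 <= t < T) no_hit t x.
Proof.
elim: T => [|T IH]; first by rewrite big_nat1 big_geq // !mul0r addr0.
have h := first_hitS_no_hitS_le T x.
set F := first_hit T.+1 x in h *; set A := no_hit T.+1 x in h *.
have h2 : T.+1%:R * (F + A) <= T.+1%:R * no_hit T x by rewrite ler_wpM2l.
rewrite big_nat_recr //= [X in _ <= X]big_nat_recr //= -[killed_step _ x]/F; nra.
Qed.

Definition first_visit_at d (s : seq 'I_n) t :=
  (nth d s t == v) && all (fun i => nth d s i != v) (iota 0 t).
Definition walk_weight d (s : seq 'I_n) t := \prod_(i < t) P (nth d s i) (nth d s i.+1).

Lemma first_visit_at_cons d y s t :
  first_visit_at d (y :: s) t.+1 = (y != v) && first_visit_at d s t.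
Proof. by rewrite /first_visit_at /= (iotaDl 1 0) all_map andbCA. Qed.

Lemma walk_weight_cons d y s t :
  walk_weight d (y :: s) t.+1 = P y (nth d s 0) * walk_weight d s t.
Proof. by rewrite /walk_weight big_ord_recl. Qed.

Lemma sum_first_visits t x d :
  \sum_(s : t.+1.-tuple 'I_n)
     (if (nth d s 0 == x) && first_visit_at d s t then walk_weight d s t else 0)
  = first_hit t x.
Proof.
elim: t x => [|t IH] x; rewrite big_tuple_cons (bigD1 x) //= [X in _ + X]big1 ?addr0.
- rewrite big_tuple0 eqxx /first_visit_at /walk_weight /= andbT big_ord0.
  by case: (x == v).
- by move=> y /negbTE yx; rewrite big_tuple0 /= yx.
- under eq_bigr => s _ do rewrite [tval _]/= first_visit_at_cons walk_weight_cons eqxx /=.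
  rewrite /killed_step; under [in RHS]eq_bigr => y _ do rewrite -(IH y) big_distrr /=.
  rewrite exchange_big /=; under [in RHS]eq_bigr => s _ do rewrite sum_mul_if_eq.
  case: (x != v); last by rewrite mul0r big1.
  by rewrite mul1r; apply: eq_bigr => s _; case: (first_visit_at d s t); rewrite ?mulr0.
- by move=> y /negbTE yx; apply: big1 => s _; rewrite /= yx.
Qed.

Lemma first_hit_probE w t : first_hit_prob e w v t = first_hit t w.
Proof. by rewrite /first_hit_prob big_mkcond -(sum_first_visits t w w). Qed.

Lemma hitting_time_ge0 w : (0 <= hitting_time (R := R) e w v)%E.
Proof.
apply: nneseries_ge0 => t _ _.
by rewrite lee_fin first_hit_probE mulr_ge0 ?first_hit_ge0.
Qed.

Lemma hitting_time_le k q w : (forall y, no_hit k y <= 1 - q) -> 0 < q ->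
  (hitting_time (R := R) e w v <= (k%:R / q)%:E)%E.
Proof.
move=> hk q0; apply: lime_le.
  apply: is_cvg_nneseries => t _ _.
  by rewrite lee_fin first_hit_probE mulr_ge0 ?first_hit_ge0.
apply: nearW => -[|T]; rewrite sumEFin lee_fin.
  by rewrite big_geq // divr_ge0 // ltW.
under eq_bigr do rewrite first_hit_probE.
apply: le_trans (sum_no_hit_le T w hk q0); apply: le_trans (partial_mean_first_hit T w).
by rewrite lerDl mulr_ge0 ?no_hit_ge0.
Qed.

End RandomWalk.

Lemma abse_sub_le (R : realType) (x : \bar R) (a b m : R) :
  (0 <= x)%E -> (x <= a%:E)%E -> 0 <= m <= b -> (`|x - m%:E| <= (a + b)%:E)%E.
Proof.
case: x => [h| |] //=; rewrite !lee_fin => h0 ha /andP[m0 mb].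
apply: le_trans (ler_normB _ _) _.
by rewrite (ger0_norm h0) (ger0_norm m0) lerD.
Qed.

Local Open Scope classical_set_scope.

Theorem corollary4p3 (R : realType) (k : nat) (p : nat -> R) (c : R)
    (C3 C4 C5 C6 C8 : R) (eps : nat -> R) :
  (2 <= k)%N -> 0 < c -> eps @ \oo --> (0 : R) ->
  (exists N0 : nat, forall n : nat, (N0 <= n)%N ->
     ln (n%:R : R) / (n%:R `^ ((k - 1)%:R / k%:R)) <= p n /\
     p n <= 1 - c * (ln (n%:R : R)) ^+ 4 / n%:R) ->
  exists (C : R) (N : nat), forall n : nat, (N <= n)%N ->
    forall e : rel 'I_n,
      in_Gknp (R := R) e k (p n) C3 C4 C5 C6 C8 (eps n) ->
      forall v w : 'I_n, v != w ->
        (`| hitting_time (R := R) e w v - (n%:R : R)%:E |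
           <= (C * (p n * n%:R) ^+ k)%:E)%E.
Proof.
move=> k2 _ _ [N0 hN].
exists (k%:R * (1 + `|C3|) ^+ k + 1), (maxn N0 4).
move=> n; rewrite geq_max => /andP[nN0 n4] e [_ _ hdiam [hdeg _ _] _] v w _.
have n0 : (0 : R) < n%:R by rewrite ltr0n (leq_trans _ n4).
set P := p n * n%:R.
have [P1 PL Pn] : [/\ 1 <= P, ln n%:R <= P & n%:R <= P ^+ k].
  apply: density_bounds; first exact: ltnW.
    by apply: ln_ge1; rewrite (ler_nat R 4).
  by rewrite ler_pM2r //; case: (hN n nN0).
set D := (1 + `|C3|) * P.
have hD y : (deg e y)%:R <= D.
  move: (hdeg y); rewrite ler_distl => /andP[_ /le_trans->] //.
  rewrite /D mulrDl mul1r lerD2l (le_trans (ler_wpM2r (sqrtr_ge0 _) (ler_norm C3))) //.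
  by rewrite ler_wpM2l // sqrt_mul_le // (le_trans ler01).
have D1 : 1 <= D by rewrite /D; have := normr_ge0 C3; nra.
have q0 : 0 < D^-1 ^+ k by rewrite exprn_gt0 // invr_gt0 (lt_le_trans ltr01 D1).
have := hitting_time_le w (no_hit_diam v D1 hD hdiam) q0; rewrite exprVn invrK => H1.
have nPk : 0 <= (n%:R : R) <= P ^+ k by rewrite ler0n Pn.
apply: le_trans (abse_sub_le (hitting_time_ge0 _ e v w) H1 nPk) _.
by rewrite lee_fin /D exprMn mulrA mulrDl mul1r.
Qed.
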